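(* Fix a total number $N_{\text{total}} > 0$ of collected data samples, split into $E_N = N_{\text{total}}/E_L$ episodes each of fixed length $E_L \in \{1,2,\dots\}$. Let $P_s(l)$ be the probability that the state at interaction step $l$ of an episode is secure, where $P_s$ does not depend on $E_L$, and define the expected number of secure state visits over all episodes as \[ N_s(E_L) = \frac{N_{\text{total}}}{E_L}\sum_{l=1}^{E_L} P_s(l). \] Then $N_s$ remains constant or increases when $E_L$ is reduced; that is, $N_s(E_L+1) \le N_s(E_L)$ for every $E_L \ge 1$.
   Context: A dead-end state is a state from which, once reached at some step of a trajectory, no policy can lead to the goal state at any later step; a secure state is a state that is not a dead-end state. The dead-end set is absorbing along trajectories (once in a dead-end state, all subsequent states are dead-end states), so that $P_s(l) = \prod_{k=1}^{l}(1-P_d(k))$ with $P_d(k) \in [0,1]$ the probability of falling into a dead-end state at step $k$; in particular $P_s$ is a non-increasing function of the interaction step $l$. *)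

From mathcomp Require Import all_boot all_order all_algebra.
Set Implicit Arguments. Unset Strict Implicit. Unset Printing Implicit Defensive.
Import Order.TTheory GRing.Theory Num.Theory.
Local Open Scope ring_scope.

(* Probability that the state at interaction step l is secure:
   P_s(l) = prod_{k=1}^{l} (1 - P_d(k)), where P_d(k) is the probability of
   falling into a dead-end state at step k. *)
Definition Psecure (R : realFieldType) (Pd : nat -> R) (l : nat) : R :=
  \prod_(1 <= k < l.+1) (1 - Pd k).

Definition Nsecure (R : realFieldType) (Ntotal : R) (Pd : nat -> R) (EL : nat) : R :=
  Ntotal / EL%:R * \sum_(1 <= l < EL.+1) Psecure Pd l.

(** Each factor [1 - P_d(k)] lies in [0, 1], so [P_s] is nonnegative and
    nonincreasing.  [N_s(E_L)] is [N_total] times the mean of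
    [P_s(1), ..., P_s(E_L)], and the running mean of a nonincreasing sequence
    is nonincreasing: the new term [P_s(E_L + 1)] is below every earlier term,
    hence below their mean. *)

From mathcomp Require Import all_boot all_order all_algebra.
From mathcomp Require Import ring lra.
Set Implicit Arguments. Unset Strict Implicit. Unset Printing Implicit Defensive.
Import Order.TTheory GRing.Theory Num.Theory.
Local Open Scope ring_scope.

Section RunningMean.
Variable R : realFieldType.

Lemma running_mean_nonincreasing (u : nat -> R) (n : nat) :
  (forall l, u l.+1 <= u l) -> (0 < n)%N ->
  (\sum_(1 <= l < n.+2) u l) / n.+1%:R <= (\sum_(1 <= l < n.+1) u l) / n%:R.
Proof.
move=> u_noninc n_gt0; set S := \sum_(1 <= l < n.+1) u l.
have last_le_sum : n%:R * u n.+1 <= S.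
  have -> : n%:R * u n.+1 = \sum_(1 <= l < n.+1) u n.+1.
    by rewrite sumr_const_nat subn1 mulr_natl.
  apply: ler_sum_nat => l /andP[_ l_le_n].
  by apply: (Order.NatMonotonyTheory.nonincnP u_noninc); apply: ltnW.
have n_pos : 0 < n%:R :> R by rewrite ltr0n.
rewrite big_nat_recr //= -natr1 -subr_ge0.
have -> : S / n%:R - (S + u n.+1) / (n%:R + 1) =
          (S - n%:R * u n.+1) / (n%:R * (n%:R + 1)).
  by field; rewrite !gt_eqF //; lra.
by apply: divr_ge0; [rewrite subr_ge0 | apply: mulr_ge0]; lra.
Qed.

End RunningMean.

Section SecureProbability.
Variables (R : realFieldType) (Pd : nat -> R).
Hypothesis Pd01 : forall k, 0 <= Pd k <= 1.

Lemma PsecureS l : Psecure Pd l.+1 = Psecure Pd l * (1 - Pd l.+1).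
Proof. by rewrite /Psecure big_nat_recr. Qed.

Lemma Psecure_ge0 l : 0 <= Psecure Pd l.
Proof.
rewrite /Psecure big_nat; apply: prodr_ge0 => k _.
by have /andP[_ Pd_le1] := Pd01 k; rewrite subr_ge0.
Qed.

Lemma Psecure_nonincreasing l : Psecure Pd l.+1 <= Psecure Pd l.
Proof.
rewrite PsecureS ler_piMr ?Psecure_ge0 //.
by have /andP[Pd_ge0 _] := Pd01 l.+1; rewrite gerBl.
Qed.

End SecureProbability.

Theorem theorem1 (R : realFieldType) (Ntotal : R) (Pd : nat -> R)
  (hN : 0 < Ntotal) (hPd : forall k, 0 <= Pd k <= 1) (EL : nat) (hEL : (1 <= EL)%N) :
  Nsecure Ntotal Pd EL.+1 <= Nsecure Ntotal Pd EL.
Proof.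
rewrite /Nsecure -!mulrA ler_pM2l // ![_^-1 * _]mulrC.
exact: running_mean_nonincreasing (Psecure_nonincreasing hPd) hEL.
Qed.
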